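(* Assume (H2). Then for any $q,q'\in\mathbb R^d$, $\delta,\delta'>0$ and $T>0$, \[\liminf_{n\to\infty}\inf_{z\in E:|z-nq|<\delta n}\frac1n\log G\bigl(z,nB(q',\delta')\bigr)\ \ge\ \liminf_{n\to\infty}\inf_{z\in E:|z-nq|<\delta n}\frac1n\log\mathbb P_z\bigl(Z(Tn)\in nB(q',\delta'/2)\bigr).\]
   Context: Let $E\subset\mathbb R^d$ be unbounded and $(Z(t))_{t\ge0}$ a continuous-time strong Markov process on $E$ with right-continuous paths having left limits; $\mathbb P_z,\mathbb E_z$ denote probability and expectation given $Z(0)=z$. $G(z,B)=\int_0^\infty\mathbb P_z(Z(t)\in B)\,dt$. For $B\subset\mathbb R^d$ and $n>0$, $nB=\{nx:x\in B\}$; $B(x,r)$ is the open ball of center $x$ and radius $r$. (H2): the function $\hat\varphi(a)=\sup_{z\in E}\sup_{t\in[0,1]}\mathbb E_z(e^{a\cdot(Z(t)-z)})$ is finite for every $a\in\mathbb R^d$. *)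

From HB Require Import structures.
From mathcomp Require Import all_boot all_order all_algebra.
From mathcomp Require Import all_classical all_reals all_analysis measurable_realfun.
Set Implicit Arguments. Unset Strict Implicit. Unset Printing Implicit Defensive.
Import Order.TTheory GRing.Theory Num.Theory.
Import numFieldNormedType.Exports.
Local Open Scope classical_set_scope.
Local Open Scope ring_scope.

Section Defs.
Context {R : realType} {d : nat}.

Definition dotp (a x : 'rV[R]_d) : R := \sum_(i < d) a ord0 i * x ord0 i.
Definition enorm (x : 'rV[R]_d) : R := Num.sqrt (dotp x x).
Definition eball (x : 'rV[R]_d) (r : R) : set 'rV[R]_d := [set y | enorm (y - x) < r].
Definition scale_set (n : R) (B : set 'rV[R]_d) : set 'rV[R]_d := [set n *: x | x in B].
Definition borel_rV : set (set 'rV[R]_d) := <<s [set U : set 'rV[R]_d | open U] >>.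

Definition unbounded (E : set 'rV[R]_d) : Prop :=
  ~ (exists M : R, forall x, E x -> enorm x <= M).

Context {dO : measure_display} {Omega : measurableType dO}.

Definition nat_filt (Z : R -> Omega -> 'rV[R]_d) (s : R) : set (set Omega) :=
  <<s [set A | exists u, 0 <= u <= s /\ exists B, borel_rV B /\ A = Z u @^-1` B] >>.

Definition stopping_time (Z : R -> Omega -> 'rV[R]_d) (tau : Omega -> \bar R) : Prop :=
  (forall w, (0 <= tau w)%E) /\
  forall t, 0 <= t -> nat_filt Z t [set w | (tau w <= t%:E)%E].

Definition F_tau (Z : R -> Omega -> 'rV[R]_d) (tau : Omega -> \bar R) (A : set Omega) : Prop :=
  forall t, 0 <= t -> nat_filt Z t (A `&` [set w | (tau w <= t%:E)%E]).

Definition strong_markov_cadlag (E : set 'rV[R]_d) (P : 'rV[R]_d -> probability Omega R)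
    (Z : R -> Omega -> 'rV[R]_d) : Prop :=
  [/\ (forall t w, E (Z t w)) /\
      (forall z, E z -> P z [set w | Z 0 w = z] = 1%E),
      (forall t B, borel_rV B -> measurable (Z t @^-1` B)),
      (forall t B (U : set (\bar R)), borel_rV B -> measurable U ->
         exists C, borel_rV C /\
           E `&` ((fun y => P y (Z t @^-1` B)) @^-1` U) = E `&` C),
      (forall w t, 0 <= t ->
         (Z^~ w @ t^'+ --> Z t w) /\ (0 < t -> cvg (Z^~ w @ t^'-))) &
      (forall z tau A t B, E z -> stopping_time Z tau -> F_tau Z tau A -> 0 <= t ->
         borel_rV B ->
         P z (A `&` [set w | (tau w < +oo)%E /\ B (Z (fine (tau w) + t) w)]) =
         (\int[P z]_(w in A `&` [set w | (tau w < +oo)%E])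
             P (Z (fine (tau w)) w) (Z t @^-1` B))%E)].

Definition Green (P : 'rV[R]_d -> probability Omega R) (Z : R -> Omega -> 'rV[R]_d)
    (z : 'rV[R]_d) (B : set 'rV[R]_d) : \bar R :=
  (\int[lebesgue_measure]_(t in `[0%R, +oo[) P z (Z t @^-1` B))%E.

Definition H2 (E : set 'rV[R]_d) (P : 'rV[R]_d -> probability Omega R)
    (Z : R -> Omega -> 'rV[R]_d) : Prop :=
  forall a : 'rV[R]_d, exists M : R, forall z, E z -> forall t, 0 <= t <= 1 ->
    (\int[P z]_w (expR (dotp a (Z t w - z)))%:E <= M%:E)%E.

End Defs.

(* Under (H2), Chernoff bounds in the 2d coordinate directions make the
   displacements of Z over time intervals of length at most 1 uniformly tight:
   there is K such that P_y(|Z(s) - y| < rho) >= 1/2 for all y in E, s in [0, 1]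
   and rho >= K.  Once n delta'/2 >= K, the Markov property at time Tn shows that
   a path in nB(q', delta'/2) at time Tn stays in nB(q', delta') during
   [Tn, Tn + 1] with probability at least 1/2, so
   G(z, nB(q', delta')) >= P_z(Z(Tn) in nB(q', delta'/2)) / 2, and the factor
   1/2 costs only (log 2)/n after taking (1/n) log. *)

From HB Require Import structures.
From mathcomp Require Import all_boot all_order all_algebra.
From mathcomp Require Import all_classical all_reals all_analysis measurable_realfun.
From mathcomp Require Import ring lra.
Import Order.TTheory GRing.Theory Num.Theory.
Import numFieldNormedType.Exports.
Local Open Scope classical_set_scope.
Local Open Scope ring_scope.
Import HBNNSimple.

Lemma mule_measure_le_integral {dT} {T : measurableType dT} {R : realType}
    (mu : {measure set T -> \bar R}) (D A : set T) (f : T -> \bar R) (c : R) :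
  measurable A -> A `<=` D -> 0 <= c ->
  (forall x, D x -> (0 <= f x)%E) -> (forall x, A x -> (c%:E <= f x)%E) ->
  (c%:E * mu A <= \int[mu]_(x in D) f x)%E.
Proof.
move=> mA AD c0 f0 fc; rewrite ge0_integralE//.
apply: ereal_sup_ubound => /=.
exists (scale_nnsfun (indic_nnsfun R mA) c0).
  move=> x /=; rewrite mindicE /patch; case: ifPn => Dx.
    case: (boolP (x \in A)) => [/[!inE] Ax|_]; first by rewrite mulr1; exact: fc.
    by rewrite mulr0; apply: f0; rewrite -inE.
  rewrite memNset ?mulr0// => Ax; move: Dx; rewrite notin_setE; apply; exact: AD.
rewrite -[mu A](sintegral_indic) (_ : \1_A = indic_nnsfun R mA)// -sintegralrM.
exact: eq_sintegral.
Qed.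

Lemma le_measure_big_setU {dT} {T : measurableType dT} {R : realType}
    (mu : {measure set T -> \bar R}) {I : Type} (s : seq I) (A : I -> set T) :
  (forall i, measurable (A i)) ->
  (mu (\big[setU/set0]_(i <- s) A i) <= \sum_(i <- s) mu (A i))%E.
Proof.
move=> mA; elim: s => [|i s IH]; first by rewrite !big_nil measure0.
rewrite !big_cons; apply: le_trans (measureU2 _ _ _) _ => //.
  by apply: big_ind => // ? ? ? ?; exact: measurableU.
exact: leeD2l.
Qed.

Section Euclid.
Context {R : realType} {d : nat}.
Implicit Types (a x y c : 'rV[R]_d).

Lemma dotp_delta (i : 'I_d) (k : R) x : dotp (k *: delta_mx ord0 i) x = k * x ord0 i.
Proof.
rewrite /dotp (bigD1 i)//= big1 ?addr0; first by rewrite !mxE !eqxx mulr1.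
by move=> j ji; rewrite !mxE (negbTE ji) andbF mulr0 mul0r.
Qed.

Lemma dotpZZ (k : R) x : dotp (k *: x) (k *: x) = k ^+ 2 * dotp x x.
Proof. by rewrite /dotp mulr_sumr; apply: eq_bigr => i _; rewrite !mxE; ring. Qed.

Lemma enormZ (k : R) x : enorm (k *: x) = `|k| * enorm x.
Proof. by rewrite /enorm dotpZZ sqrtrM ?sqr_ge0// sqrtr_sqr. Qed.

Lemma enorm_lt x (r : R) : 0 < r -> (enorm x < r) = (dotp x x < r ^+ 2).
Proof.
move=> r0; rewrite /enorm -{1}(ger0_norm (ltW r0)) -sqrtr_sqr ltr_sqrt//.
by rewrite exprn_gt0.
Qed.

(* Avoids Cauchy-Schwarz: coordinatewise [(a + b)^2 <= 2 a^2 + 2 b^2]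
   suffices for the radius [2 r]. *)
Lemma enormD_lt x y (r : R) : 0 < r ->
  enorm x < r -> enorm y < r -> enorm (x + y) < 2 * r.
Proof.
move=> r0; rewrite !enorm_lt ?mulr_gt0// => hx hy.
have : dotp (x + y) (x + y) <= 2 * dotp x x + 2 * dotp y y.
  rewrite /dotp !mulr_sumr -big_split /=; apply: ler_sum => i _.
  by rewrite !mxE; have := sqr_ge0 (x ord0 i - y ord0 i); rewrite expr2; nra.
have : (2 * r) ^+ 2 = 4 * r ^+ 2 by ring.
lra.
Qed.

Lemma enorm_lt_coord x (m rho : R) : 0 < rho -> d%:R * m ^+ 2 < rho ^+ 2 ->
  (forall i, `|x ord0 i| <= m) -> enorm x < rho.
Proof.
move=> rho0 hm hx; rewrite enorm_lt//; apply: le_lt_trans hm.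
apply: le_trans (_ : _ <= \sum_(i < d) m ^+ 2) _; last first.
  by rewrite sumr_const card_ord mulr_natl.
apply: ler_sum => i _; rewrite -expr2 -real_normK ?num_real//.
by rewrite lerXn2r// ?nnegrE// (le_trans _ (hx i)).
Qed.

Definition coord_dir (p : 'I_d * bool) : 'rV[R]_d :=
  (if p.2 then 1 else -1) *: delta_mx ord0 p.1.

Lemma exists_coord_dir_ge x (m rho : R) : 0 < rho -> d%:R * m ^+ 2 < rho ^+ 2 ->
  ~ enorm x < rho -> exists p, m <= dotp (coord_dir p) x.
Proof.
move=> rho0 hm; apply: contra_notP => nS; apply: enorm_lt_coord rho0 hm _ => i.
have nSi b : ~ m <= dotp (coord_dir (i, b)) x by move=> h; apply: nS; exists (i, b).
move: (nSi true) (nSi false); rewrite /coord_dir /= !dotp_delta mul1r mulN1r.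
move=> /negP; rewrite -ltNge => /ltW hp /negP; rewrite -ltNge => /ltW hn.
by rewrite ler_norml hp andbT lerNl.
Qed.

Lemma scale_set_eball (k : R) c (r : R) : 0 < k ->
  scale_set k (eball c r) = eball (k *: c) (k * r).
Proof.
move=> k0; apply/seteqP; split => x /=.
  by move=> [y yb <-]; rewrite /eball /= -scalerBr enormZ gtr0_norm// ltr_pM2l.
move=> h; exists (k^-1 *: x); last by rewrite scalerA mulfV ?gt_eqF// scale1r.
rewrite /eball /= -[c](scalerK (lt0r_neq0 k0)) -scalerBr enormZ gtr0_norm ?invr_gt0//.
by rewrite ltr_pdivrMl// mulrC.
Qed.

Lemma continuous_dotp (T : topologicalType) (f g : T -> 'rV[R]_d) :
  continuous f -> continuous g -> continuous (fun t => dotp (f t) (g t)).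
Proof.
move=> cf cg.
have -> : (fun t => dotp (f t) (g t)) = \sum_(i < d) (fun t => f t ord0 i * g t ord0 i).
  by apply/funext => t; rewrite fct_sumE.
apply: (big_ind (fun h : T -> R => continuous h)).
- exact: cst_continuous.
- by move=> h1 h2 c1 c2 t; apply: continuousD; [exact: c1|exact: c2].
- move=> i _ t; apply: continuousM.
    by apply: (@continuous_comp _ _ _ f (fun v => v ord0 i));
      [exact: cf|exact: coord_continuous].
  by apply: (@continuous_comp _ _ _ g (fun v => v ord0 i));
      [exact: cg|exact: coord_continuous].
Qed.

Lemma open_eball c (r : R) : open (eball c r).
Proof.
apply: (@open_comp _ _ (fun x => enorm (x - c)) [set y | y < r]); last exact: open_lt.
have subc : continuous (fun x : 'rV[R]_d => x - c).
  by move=> y; apply: continuousB; [exact: cvg_id|exact: cst_continuous].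
move=> x _; apply: (@continuous_comp _ _ _ (fun x => dotp (x - c) (x - c)) Num.sqrt).
  exact: continuous_dotp.
exact: sqrt_continuous.
Qed.

Lemma borel_rV_open (U : set 'rV[R]_d) : open U -> borel_rV U.
Proof. exact: sub_sigma_algebra. Qed.

Lemma borel_rV_halfspace a y (m : R) : borel_rV [set x | m <= dotp a (x - y)].
Proof.
rewrite -[X in borel_rV X]setCK; apply: sigma_algebraC; apply: borel_rV_open.
rewrite (_ : ~` _ = [set x | dotp a (x - y) < m]); last first.
  by apply/seteqP; split => x /=; rewrite ltNge => /negP.
apply: (@open_comp _ _ (fun x => dotp a (x - y)) [set t | t < m]); last exact: open_lt.
move=> x _; apply: continuous_dotp; first exact: cst_continuous.
by move=> z; apply: continuousB; [exact: cvg_id|exact: cst_continuous].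
Qed.

End Euclid.

Section Tightness.
Context {R : realType} {d : nat} {dO : measure_display} {Omega : measurableType dO}.
Context {E : set 'rV[R]_d} {P : 'rV[R]_d -> probability Omega R}
  {Z : R -> Omega -> 'rV[R]_d}.
Hypothesis mZ : forall t B, borel_rV B -> measurable (Z t @^-1` B).

Lemma chernoff_bound a (M m : R) y s :
  (\int[P y]_w (expR (dotp a (Z s w - y)))%:E <= M%:E)%E ->
  (P y (Z s @^-1` [set x | (m <= dotp a (x - y))%R]) <= (expR (- m) * M)%:E)%E.
Proof.
move=> HM; rewrite expRN EFinM lee_pdivlMl ?expR_gt0//; apply: le_trans HM.
apply: mule_measure_le_integral => //.
- by apply: mZ; exact: borel_rV_halfspace.
- by move=> w /= h; rewrite lee_fin ler_expR.
Qed.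

Lemma prob_eball_compl_le y s (m rho : R) : 0 < rho -> d%:R * m ^+ 2 < rho ^+ 2 ->
  (P y (~` (Z s @^-1` eball y rho)) <=
   \sum_p P y (Z s @^-1` [set x | (m <= dotp (coord_dir p) (x - y))%R]))%E.
Proof.
move=> rho0 hm.
have mS p : measurable (Z s @^-1` [set x | m <= dotp (coord_dir p) (x - y)]).
  by apply: mZ; exact: borel_rV_halfspace.
apply: le_trans (le_measure_big_setU (P y) _ _ mS).
apply: le_measure; rewrite ?inE.
- by apply: measurableC; apply: mZ; apply: borel_rV_open; exact: open_eball.
- by apply: big_ind => // ? ? ? ?; exact: measurableU.
move=> w /= /(exists_coord_dir_ge _ _ _ rho0 hm) [p hp]; rewrite -bigcup_seq.
by exists p; rewrite /= ?mem_index_enum.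
Qed.

Hypothesis hH2 : H2 E P Z.

Lemma displacement_tight : exists K : R, forall rho, K <= rho -> forall y, E y ->
  forall s, 0 <= s <= 1 -> ((1/2)%:E <= P y (Z s @^-1` eball y rho))%E.
Proof.
have [bnd hbnd] := choice (fun p => hH2 (coord_dir p)).
pose n := #|{: 'I_d * bool}|.
pose M := 1 + \sum_p `|bnd p|.
have M0 : 0 < M by rewrite ltr_pwDl ?sumr_ge0.
have bndM p : ((bnd p)%:E <= M%:E)%E.
  rewrite lee_fin; apply: le_trans (ler_norm _) _.
  by rewrite /M (bigD1 p)//= addrCA lerDl addr_ge0 ?sumr_ge0.
pose c := (2 * n.+1%:R)^-1 : R.
have c0 : 0 < c by rewrite invr_gt0 mulr_gt0.
(* [m] is chosen so that [M exp(-m) <= M / m = c], and [n c <= 1/2]. *)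
pose m := M / c.
exists (1 + d%:R * m ^+ 2) => rho hrho y Ey s s01.
have rho1 : 1 <= rho by apply: le_trans hrho; rewrite lerDl mulr_ge0 ?sqr_ge0.
have rho0 : 0 < rho by apply: lt_le_trans rho1.
have hm : d%:R * m ^+ 2 < rho ^+ 2.
  have rho2 : rho <= rho ^+ 2 by rewrite expr2; exact: ler_peMr (ltW rho0) rho1.
  by apply: lt_le_trans (le_trans hrho rho2); rewrite ltrDr.
have tail p :
    (P y (Z s @^-1` [set x | (m <= dotp (coord_dir p) (x - y))%R]) <= c%:E)%E.
  apply: le_trans (@chernoff_bound (coord_dir p) M m y s _) _.
    exact: le_trans (hbnd p y Ey s s01) (bndM p).
  rewrite lee_fin expRN ler_pdivrMl ?expR_gt0//.
  apply: le_trans (_ : M <= m * c) _; first by rewrite /m divfK ?gt_eqF.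
  by rewrite ler_pM2r//; apply: le_trans (expR_ge1Dx m); rewrite lerDr.
have far : (P y (~` (Z s @^-1` eball y rho)) <= (1/2)%:E)%E.
  apply: le_trans (prob_eball_compl_le y s m rho rho0 hm) _.
  apply: le_trans (lee_sum _ (fun p _ => tail p)) _.
  rewrite sumEFin lee_fin sumr_const -/n /c -[X in X <= _]mulr_natl.
  rewrite ler_pdivrMr ?mulr_gt0//.
  have : (n%:R : R) <= n.+1%:R by rewrite ler_nat.
  lra.
have mA : measurable (Z s @^-1` eball y rho).
  by apply: mZ; apply: borel_rV_open; exact: open_eball.
move: far; rewrite probability_setC// -(fineK (fin_num_measure _ _ mA)).
by rewrite -EFinB !lee_fin; lra.
Qed.

End Tightness.

Section Markov.
Context {R : realType} {d : nat} {dO : measure_display} {Omega : measurableType dO}.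
Context {E : set 'rV[R]_d} {P : 'rV[R]_d -> probability Omega R}
  {Z : R -> Omega -> 'rV[R]_d}.

Lemma Green_ge z t0 (c : R) B : 0 <= t0 -> 0 <= c ->
  (forall s, 0 <= s <= 1 -> (c%:E <= P z (Z (t0 + s) @^-1` B))%E) ->
  (c%:E <= Green P Z z B)%E.
Proof.
move=> t00 c0 hc; rewrite /Green.
have itv1 : lebesgue_measure (`[t0, t0 + 1]%classic : set R) = 1%E.
  by rewrite lebesgue_measure_itv/= lte_fin ltrDl ltr01 -EFinB addrAC subrr add0r.
rewrite -[c%:E]mule1 -itv1; apply: mule_measure_le_integral => //.
- by move=> t /=; rewrite !in_itv/= andbT => /andP[/(le_trans t00)].
- move=> t /=; rewrite in_itv/= => /andP[h1 h2].
  by rewrite -[t](subrKC t0); apply: hc; rewrite subr_ge0 h1 lerBlDl.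
Qed.

Lemma nat_filtT t : nat_filt Z t setT.
Proof. by rewrite -setC0; apply: sigma_algebraC; exact: sigma_algebra0. Qed.

Lemma stopping_time_cst t0 : 0 <= t0 -> stopping_time Z (fun=> t0%:E).
Proof.
move=> t00; split => [w|t _]; first by rewrite lee_fin.
have [lt0t|ltt0] := lerP t0 t.
  rewrite (_ : [set _ | _] = setT); first exact: nat_filtT.
  by apply/seteqP; split => w //= _; rewrite lee_fin.
rewrite (_ : [set _ | _] = set0); first exact: sigma_algebra0.
by apply/seteqP; split => w //=; rewrite lee_fin leNgt ltt0.
Qed.

Lemma F_tau_cst t0 B : 0 <= t0 -> borel_rV B ->
  F_tau Z (fun=> t0%:E) (Z t0 @^-1` B).
Proof.
move=> t00 bB t _; have [lt0t|ltt0] := lerP t0 t.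
  rewrite (_ : _ `&` _ = Z t0 @^-1` B).
    by apply: sub_sigma_algebra; exists t0; split; [rewrite t00 lt0t|exists B].
  by apply/seteqP; split => w /=; [case|split => //; rewrite lee_fin].
rewrite (_ : _ `&` _ = set0); first exact: sigma_algebra0.
by apply/seteqP; split => w //= -[_]; rewrite lee_fin leNgt ltt0.
Qed.

Hypothesis hSM : strong_markov_cadlag E P Z.

Let mZ t B : borel_rV B -> measurable (Z t @^-1` B).
Proof. by case: hSM => _ + _ _ _; apply. Qed.

Lemma markov_property z t0 t A B : E z -> 0 <= t0 -> 0 <= t ->
  borel_rV A -> borel_rV B ->
  P z (Z t0 @^-1` A `&` Z (t0 + t) @^-1` B) =
  (\int[P z]_(w in Z t0 @^-1` A) P (Z t0 w) (Z t @^-1` B))%E.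
Proof.
move=> Ez t00 ht bA bB; case: hSM => _ _ _ _ /(_ z _ _ t B Ez).
move=> /(_ _ _ (stopping_time_cst _ t00) (F_tau_cst _ _ t00 bA) ht bB) /=.
rewrite (_ : [set w | _ /\ _] = Z (t0 + t) @^-1` B); last first.
  by apply/seteqP; split => w /=; [case|split => //; rewrite ltry].
by rewrite (_ : [set w | _] = setT) ?setIT//; apply/seteqP; split => w //= _; rewrite ltry.
Qed.

Lemma prob_eball_double {K : R} :
  (forall rho, K <= rho -> forall y, E y -> forall s, 0 <= s <= 1 ->
     ((1/2)%:E <= P y (Z s @^-1` eball y rho))%E) ->
  forall z t0 s c r, 0 < r -> K <= r -> 0 <= t0 -> 0 <= s <= 1 -> E z ->
  ((1/2)%:E * P z (Z t0 @^-1` eball c r) <=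
   P z (Z (t0 + s) @^-1` eball c (2 * r)))%E.
Proof.
move=> tight z t0 s c r r0 Kr t00 /andP[s0 s1] Ez.
have bball y rho : borel_rV (eball y rho) by apply: borel_rV_open; exact: open_eball.
have EZ t w : E (Z t w) by case: hSM => -[+ _] _ _ _ _; apply.
apply: le_trans (_ : _ <= P z (Z t0 @^-1` eball c r `&` Z (t0 + s) @^-1` eball c (2 * r)))%E _.
  rewrite markov_property//; apply: mule_measure_le_integral => //; first exact: mZ.
  move=> w /= hw; apply: le_trans (tight r Kr _ (EZ t0 w) s _) _; first by rewrite s0.
  apply: le_measure; rewrite ?inE; [exact: mZ|exact: mZ|].
  move=> w' /= hw'; rewrite /eball /= -[Z s w' - c](subrKA (Z t0 w)).
  exact: enormD_lt.
by apply: le_measure; rewrite ?inE; [apply: measurableI; exact: mZ|exact: mZ|move=> w []].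
Qed.

End Markov.

Section Asymptotics.
Context {R : realType}.
Local Open Scope ereal_scope.

Lemma limn_einf_le_approx (u v : (\bar R)^nat) :
  (forall e : R, (0 < e)%R -> \forall n \near \oo, u n - e%:E <= v n) ->
  limn_einf u <= limn_einf v.
Proof.
move=> uv; apply/lee_subgt0Pr => e e0; have [N _ hN] := uv e e0.
rewrite addeC -limn_einf_shift// !limn_einf_lim.
apply: lee_lim; [exact: is_cvg_einfs|exact: is_cvg_einfs|].
near=> n; apply: le_ereal_inf_tmp => _ [k /= nk <-].
apply: ereal_inf_le; exists (- e%:E + u k); first by exists k.
rewrite addeC; apply: hN; apply: leq_trans nk.
by near: n; exists N.
Unshelve. all: by end_near. Qed.

Lemma limn_einf_ereal_inf_le {T : Type} (S : nat -> set T) (u v : nat -> T -> \bar R) :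
  (forall e : R, (0 < e)%R ->
     \forall n \near \oo, forall z, S n z -> u n z - e%:E <= v n z) ->
  limn_einf (fun n => ereal_inf (u n @` S n)) <=
  limn_einf (fun n => ereal_inf (v n @` S n)).
Proof.
move=> uv; apply: limn_einf_le_approx => e e0; apply: filterS (uv e e0) => n uvn.
apply: le_ereal_inf_tmp => _ [z Sz <-]; apply: le_trans (uvn z Sz).
by apply: leeD2r; apply: ereal_inf_lbound; exists z.
Qed.

Lemma scaled_lne_half_le (N e : R) (p g : \bar R) : (0 < N)%R -> (ln 2 / N <= e)%R ->
  0 <= p -> p \is a fin_num -> (1/2)%:E * p <= g ->
  N^-1%:E * lne p - e%:E <= N^-1%:E * lne g.
Proof.
move=> N0 hNe; case: p => // p; rewrite lee_fin => p0 _ hg.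
have [p_le0|p_gt0] := lerP p 0%R.
  by rewrite le0_lneNy ?lee_fin// gt0_muleNy ?lte_fin ?invr_gt0// addeC addeNy leNye.
have hp2 : (1/2)%:E * p%:E = (p / 2)%:E by rewrite -EFinM mul1r mulrC.
rewrite hp2 in hg.
have hG : (ln (p / 2))%:E <= lne g.
  rewrite -lne_EFin ?divr_gt0// lee_lne// in_itv/= ?leey ?andbT ?lee_fin ?divr_ge0 ?ltW//.
  by apply: lt_le_trans hg; rewrite lte_fin divr_gt0.
have N0' : 0 <= N^-1%:E by rewrite lee_fin invr_ge0 ltW.
apply: le_trans (lee_wpmul2l N0' hG).
rewrite lne_EFin// -EFinM -EFinB lee_fin ln_div ?posrE// mulrBr lerD2l lerN2 mulrC.
exact: hNe.
Qed.

End Asymptotics.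

Theorem mainTheorem8 (R : realType) (d : nat) (dO : measure_display)
  (Omega : measurableType dO) (E : set 'rV[R]_d)
  (P : 'rV[R]_d -> probability Omega R) (Z : R -> Omega -> 'rV[R]_d) :
  unbounded E -> strong_markov_cadlag E P Z -> H2 E P Z ->
  forall (q q' : 'rV[R]_d) (delta delta' T : R),
    0 < delta -> 0 < delta' -> 0 < T ->
  (limn_einf (fun n : nat =>
     ereal_inf [set ((n%:R)^-1)%R%:E * lne (P z (Z (T * n%:R)%R @^-1`
                    scale_set n%:R (eball q' (delta' / 2)%R))) | z in
                [set z | E z /\ (enorm (z - n%:R *: q) < delta * n%:R)%R]])
   <=
   limn_einf (fun n : nat =>
     ereal_inf [set ((n%:R)^-1)%R%:E * lne (Green P Z z (scale_set n%:R (eball q' delta'))) | z in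
                [set z | E z /\ (enorm (z - n%:R *: q) < delta * n%:R)%R]]))%E.
Proof.
move=> _ hSM hH2 q q' delta dl T _ dl0 T0.
have mZ t B : borel_rV B -> measurable (Z t @^-1` B) by case: hSM => _ + _ _ _; apply.
have [K tight] := displacement_tight mZ hH2.
apply: limn_einf_ereal_inf_le => e e0; near=> n => z [Ez _].
have n0 : 0 < n%:R :> R by near: n; exact: nbhs_infty_gtr.
have Kn : K <= n%:R * (dl / 2).
  by rewrite -ler_pdivrMr ?divr_gt0//; apply: ltW; near: n; exact: nbhs_infty_gtr.
have ln2n : ln 2 / n%:R <= e.
  by rewrite ler_pdivrMr// mulrC -ler_pdivrMr//; apply: ltW; near: n; exact: nbhs_infty_gtr.
rewrite !scale_set_eball// (_ : n%:R * dl = 2 * (n%:R * (dl / 2))); last by field.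
set A := Z (T * n%:R) @^-1` _.
have pA : P z A \is a fin_num.
  by apply: fin_num_measure; apply: mZ; apply: borel_rV_open; exact: open_eball.
apply: (@scaled_lne_half_le _ _ _ _ _ n0 ln2n (measure_ge0 _ _) pA).
rewrite -[X in (_ * X <= _)%E](fineK pA) -EFinM.
apply: (Green_ge _ (T * n%:R)) => [||s s01].
- by rewrite mulr_ge0// ltW.
- by rewrite mulr_ge0// fine_ge0// measure_ge0.
rewrite EFinM fineK//; apply: (prob_eball_double hSM tight) => //.
  by rewrite mulr_gt0 ?divr_gt0.
by rewrite mulr_ge0// ltW.
Unshelve. all: by end_near. Qed.
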